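(* Let $\lambda\ge\Delta^{-1/2}$. For every $y=(s,r,s')$ with $s,s'\in\mathcal S$ and $r\in[0,1]$, and all $(p,g),(q,g')\in\mathcal Z$, \[ d_\lambda\bigl((H_g(p,y),r),(H_{g'}(q,y),r)\bigr)\le d_\lambda\bigl((p,g),(q,g')\bigr). \]
   Context: $\mathcal S=\{1,\dots,m\}$ finite. $\Theta=\{\theta_1<\dots<\theta_d\}$ with constant stride $\Delta>0$; $\Delta_d$ the probability simplex of $\mathbb R^d$; $\Delta_d^{\mathcal S}$ families $(p_i)_{i\in\mathcal S}$ with $p_i\in\Delta_d$; $\mathcal Z:=\Delta_d^{\mathcal S}\times[0,1]$. For $u\in\Delta_d$, $\eta^{u,0}:=\sum_ku_k\delta_{\theta_k}$. Categorical projection $\Pi^\Theta_{\mathrm C}$: $\delta_x\mapsto\delta_{\theta_1}$ if $x\le\theta_1$, $\delta_{\theta_d}$ if $x\ge\theta_d$, $\frac{\theta_{k+1}-x}{\Delta}\delta_{\theta_k}+\frac{x-\theta_k}{\Delta}\delta_{\theta_{k+1}}$ if $\theta_k\le x\le\theta_{k+1}$, extended linearly to laws. For $b\in\mathbb R$, $L_bu\in\Delta_d$ is defined by $\Pi^\Theta_{\mathrm C}(\text{law of }X+b,\ X\sim\eta^{u,0})=\eta^{L_bu,0}$. For $g\in\mathbb R$, $H_g(p,(s,r,s'))=q$ with $q_u=p_u$ for $u\ne s$ and $q_s=L_{r-g}p_{s'}$. Coordinate Cramér metric: $F_u(\theta_k):=\sum_{j\le k}u_j$, $\ell^\Theta_{\mathrm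 C}(u,v)^2:=\Delta\sum_{k=1}^{d-1}(F_u(\theta_k)-F_v(\theta_k))^2$, $\ell^\Theta_{\mathrm C,\infty}(p,q):=\max_i\ell^\Theta_{\mathrm C}(p_i,q_i)$. Product metric $d_\lambda((p,g),(q,g')):=\ell^\Theta_{\mathrm C,\infty}(p,q)+\lambda|g-g'|$. *)

From HB Require Import structures.
From mathcomp Require Import all_boot all_order all_algebra.
From mathcomp Require Import reals.
Set Implicit Arguments. Unset Strict Implicit. Unset Printing Implicit Defensive.
Import Order.TTheory GRing.Theory Num.Theory.
Local Open Scope ring_scope.

(* Grid Theta = {theta_0 < ... < theta_{d-1}} (0-indexed), theta_k = theta1 + k*Delta.
   Throughout, R and d are implicit; theta1, Delta are explicit. *)
Definition theta {R : realType} (theta1 Delta : R) (k : nat) : R :=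
  theta1 + k%:R * Delta.

Definition in_simplex {R : realType} {d : nat} (u : 'I_d -> R) : Prop :=
  (forall k, 0 <= u k) /\ \sum_(k < d) u k = 1.

(* mass put on theta_j by the categorical projection Pi_C(delta_x) *)
Definition proj_weight {R : realType} {d : nat} (theta1 Delta : R)
  (x : R) (j : 'I_d) : R :=
  if x <= theta theta1 Delta 0 then (if (j == 0 :> nat) then 1 else 0)
  else if theta theta1 Delta d.-1 <= x then (if (j == d.-1 :> nat) then 1 else 0)
  else Num.max 0 (1 - `|x - theta theta1 Delta j| / Delta).

(* L_b u : eta^{L_b u,0} = Pi_C(law of X + b), X ~ sum_k u_k delta_{theta_k} *)
Definition Lshift {R : realType} {d : nat} (theta1 Delta : R)
  (b : R) (u : 'I_d -> R) : 'I_d -> R :=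
  fun j => \sum_(k < d) u k * proj_weight theta1 Delta (theta theta1 Delta k + b) j.

Definition Hupd {R : realType} {d m : nat} (theta1 Delta : R) (g : R)
  (p : 'I_m -> 'I_d -> R) (s : 'I_m) (r : R) (s' : 'I_m) : 'I_m -> 'I_d -> R :=
  fun u => if u == s then Lshift theta1 Delta (r - g) (p s') else p u.

(* cumulative distribution F_u(theta_k) (0-indexed k) *)
Definition cdf {R : realType} {d : nat} (u : 'I_d -> R) (k : nat) : R :=
  \sum_(j < d | (j <= k)%N) u j.

Definition cramer {R : realType} {d : nat} (Delta : R) (u v : 'I_d -> R) : R :=
  Num.sqrt (Delta * \sum_(k < d.-1) (cdf u k - cdf v k) ^+ 2).

Definition cramer_inf {R : realType} {d m : nat} (Delta : R)
  (p q : 'I_m -> 'I_d -> R) : R :=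
  \big[Num.max/0]_(i < m) cramer Delta (p i) (q i).

Definition dlam {R : realType} {d m : nat} (Delta lam : R)
  (p : 'I_m -> 'I_d -> R) (g : R) (q : 'I_m -> 'I_d -> R) (g' : R) : R :=
  cramer_inf Delta p q + lam * `|g - g'|.

From HB Require Import structures.
From mathcomp Require Import all_boot all_order all_algebra.
From mathcomp Require Import reals.
From mathcomp Require Import ring lra zify.
Import Order.TTheory GRing.Theory Num.Theory.
Set Implicit Arguments.
Unset Strict Implicit.
Unset Printing Implicit Defensive.
Local Open Scope ring_scope.

(** Write c for the clamp to [0, 1]. The CDF of L_b u at theta_k is
   sum_i u_i c(k + 1 - i - b/Delta). Hence, by summation by parts, the CDF
   differences of L_b u and L_b v are obtained from those of u and v by a
   nonnegative matrix whose row and column sums are at most 1, which is an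
   l2-contraction. Changing b into b' moves every CDF value monotonically by at
   most |b - b'|/Delta, and all of them together by at most that much, so the
   Cramer distance moves by at most |b - b'|/sqrt Delta <= lam |b - b'|.
   Since both updated returns equal r and H only rewrites coordinate s, the
   triangle inequality concludes. *)

Ltac case_minmax := repeat match goal with
  | |- context [Order.max ?a ?b] => case: (leP a b) => ?
  | |- context [Order.min ?a ?b] => case: (leP a b) => ?
  end.

Lemma sumr_ord_telescope (V : zmodType) N (f : nat -> V) :
  \sum_(k < N) (f k - f k.+1) = f 0%N - f N.
Proof.
rewrite -(big_mkord xpredT (fun k => f k - f k.+1)) -opprB.
by rewrite -(telescope_sumr f (leq0n N)) -sumrN; apply: eq_bigr => k _; rewrite opprB.
Qed.

Section Clamp.
Variable R : realFieldType.
Implicit Types x y a b : R.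

Definition clamp01 x : R := Num.min 1 (Num.max 0 x).

Lemma clamp01_ge0 x : 0 <= clamp01 x.
Proof. by rewrite /clamp01; case_minmax; lra. Qed.

Lemma clamp01_le1 x : clamp01 x <= 1.
Proof. by rewrite /clamp01; case_minmax; lra. Qed.

Lemma ler_clamp01 x y : x <= y -> clamp01 x <= clamp01 y.
Proof. by rewrite /clamp01 => ?; case_minmax; lra. Qed.

Lemma clamp01_subr_le x y : x <= y -> clamp01 y - clamp01 x <= y - x.
Proof. by rewrite /clamp01 => ?; case_minmax; lra. Qed.

Lemma clamp01_subr_le1 x y : clamp01 x - clamp01 y <= 1.
Proof. by have := clamp01_le1 x; have := clamp01_ge0 y; lra. Qed.

Lemma clamp01D1 x : clamp01 (x + 1) = clamp01 x + Num.max 0 (1 - `|x|).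
Proof.
rewrite /clamp01; case: (lerP 0 x) => x0;
  [rewrite ger0_norm // | rewrite ltr0_norm //]; case_minmax; lra.
Qed.

Lemma sum_hat n y :
  \sum_(j < n) Num.max 0 (1 - `|j%:R - y|) = clamp01 (n%:R - y) - clamp01 (- y).
Proof.
elim: n => [|n IH]; first by rewrite big_ord0 sub0r subrr.
rewrite big_ord_recr /= IH -natr1 (_ : n%:R + 1 - y = n%:R - y + 1); last by ring.
by rewrite clamp01D1; ring.
Qed.

Lemma sum_clamp01 N a :
  \sum_(k < N) clamp01 (k%:R + a) = Num.min N%:R (Num.max 0 (N%:R - 1 + a)).
Proof.
elim: N => [|N IH]; first by rewrite big_ord0; case_minmax; lra.
rewrite big_ord_recr /= IH /clamp01 -natr1.
by have : 0 <= N%:R :> R by []; case_minmax; lra.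
Qed.

Lemma sum_clamp01_subr_le N a b : b <= a ->
  \sum_(k < N) (clamp01 (k%:R + a) - clamp01 (k%:R + b)) <= a - b.
Proof.
by move=> ba; rewrite sumrB !sum_clamp01; have : 0 <= N%:R :> R by [];
  case_minmax; lra.
Qed.

End Clamp.

Section SquareSums.
Variable R : realFieldType.

Lemma sqr_wsum_le (I : finType) (h W : I -> R) :
  (forall i, 0 <= h i) -> \sum_i h i <= 1 ->
  (\sum_i h i * W i) ^+ 2 <= \sum_i h i * W i ^+ 2.
Proof.
move=> h_ge0 h_le1; set A := \sum_i h i * W i.
have var_ge0 : 0 <= \sum_i h i * (W i - A) ^+ 2.
  by apply: sumr_ge0 => i _; rewrite mulr_ge0 ?sqr_ge0.
have varE : \sum_i h i * (W i - A) ^+ 2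
    = \sum_i h i * W i ^+ 2 - 2 * A * A + A ^+ 2 * \sum_i h i.
  rewrite (eq_bigr (fun i => h i * W i ^+ 2 - 2 * A * (h i * W i) + A ^+ 2 * h i));
    last by move=> i _; ring.
  by rewrite big_split /= sumrB -!mulr_sumr.
have hs_ge0 : 0 <= \sum_i h i by exact: sumr_ge0.
have : 0 <= 1 - \sum_i h i by rewrite subr_ge0.
by move/(mulr_ge0 (sqr_ge0 A)); rewrite varE in var_ge0; nra.
Qed.

Lemma sum_sqr_substochastic_le (I J : finType) (h : I -> J -> R) (W : J -> R) :
  (forall i j, 0 <= h i j) ->
  (forall i, \sum_j h i j <= 1) -> (forall j, \sum_i h i j <= 1) ->
  \sum_i (\sum_j h i j * W j) ^+ 2 <= \sum_j W j ^+ 2.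
Proof.
move=> h_ge0 rows cols.
apply: (@le_trans _ _ (\sum_i \sum_j h i j * W j ^+ 2)).
  by apply: ler_sum => i _; exact: sqr_wsum_le.
rewrite exchange_big /=; apply: ler_sum => j _.
by rewrite -mulr_suml -[leRHS]mul1r ler_wpM2r ?sqr_ge0.
Qed.

Lemma sum_sqr_le_sqr (I : finType) (D : I -> R) M :
  (forall i, 0 <= D i <= M) -> \sum_i D i <= M -> \sum_i D i ^+ 2 <= M ^+ 2.
Proof.
move=> D_bnd D_sum; apply: (@le_trans _ _ (\sum_i M * D i)).
  apply: ler_sum => i _; have /andP[D0 DM] := D_bnd i.
  by rewrite expr2 ler_wpM2r.
have M_ge0 : 0 <= M.
  by apply: le_trans D_sum; apply: sumr_ge0 => i _; case/andP: (D_bnd i).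
by rewrite -mulr_sumr expr2 ler_wpM2l.
Qed.

End SquareSums.

Section EuclideanNorm.
Variables (R : rcfType) (I : finType).
Implicit Types X Y : I -> R.

Lemma cauchy_schwarz_sum X Y :
  (\sum_i X i * Y i) ^+ 2 <= (\sum_i X i ^+ 2) * (\sum_i Y i ^+ 2).
Proof.
set P := \sum_i X i ^+ 2; set Q := \sum_i Y i ^+ 2; set S := \sum_i X i * Y i.
have P_ge0 : 0 <= P by apply: sumr_ge0 => i _; exact: sqr_ge0.
have Q_ge0 : 0 <= Q by apply: sumr_ge0 => i _; exact: sqr_ge0.
have [Q_gt0|Q_le0] := ltrP 0 Q; last first.
  have Y0 i : Y i = 0.
    apply/eqP; rewrite -sqrf_eq0; apply/eqP.
    apply: (psumr_eq0P (P := xpredT) (F := fun i => Y i ^+ 2)) => // [j _|].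
      exact: sqr_ge0.
    by apply/le_anti/andP.
  by rewrite /S big1 ?expr0n ?mulr_ge0 // => i _; rewrite Y0 mulr0.
have : 0 <= \sum_i (Q * X i - S * Y i) ^+ 2 by apply: sumr_ge0 => i _; exact: sqr_ge0.
rewrite (eq_bigr (fun i => Q ^+ 2 * X i ^+ 2 - 2 * Q * S * (X i * Y i) + S ^+ 2 * Y i ^+ 2));
  last by move=> i _; ring.
rewrite big_split sumrB /= -!mulr_sumr -/P -/Q -/S => H.
have : 0 <= Q * (P * Q - S ^+ 2) by lra.
by rewrite pmulr_rge0 // subr_ge0.
Qed.

Lemma minkowski_sum X Y :
  Num.sqrt (\sum_i (X i + Y i) ^+ 2)
    <= Num.sqrt (\sum_i X i ^+ 2) + Num.sqrt (\sum_i Y i ^+ 2).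
Proof.
set P := \sum_i X i ^+ 2; set Q := \sum_i Y i ^+ 2; set S := \sum_i X i * Y i.
have P_ge0 : 0 <= P by apply: sumr_ge0 => i _; exact: sqr_ge0.
have Q_ge0 : 0 <= Q by apply: sumr_ge0 => i _; exact: sqr_ge0.
have sumE : \sum_i (X i + Y i) ^+ 2 = P + 2 * S + Q.
  rewrite (eq_bigr (fun i => X i ^+ 2 + 2 * (X i * Y i) + Y i ^+ 2));
    last by move=> i _; ring.
  by rewrite !big_split /= -mulr_sumr.
have S_le : S <= Num.sqrt P * Num.sqrt Q.
  rewrite -sqrtrM // (le_trans (ler_norm S)) // -sqrtr_sqr ler_wsqrtr //.
  exact: cauchy_schwarz_sum.
rewrite -[leRHS]ger0_norm ?addr_ge0 ?sqrtr_ge0 // -sqrtr_sqr ler_wsqrtr // sumE.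
by rewrite sqrrD !sqr_sqrtr //; lra.
Qed.

End EuclideanNorm.

Section CramerDistance.
Variables (R : realType) (d : nat) (t1 D : R).
Hypothesis D_gt0 : 0 < D.
Implicit Types (u v w : 'I_d -> R) (a b : R).

Lemma cdfB u v k : cdf (fun i => u i - v i) k = cdf u k - cdf v k.
Proof. by rewrite /cdf sumrB. Qed.

Lemma sum_by_parts w (f : nat -> R) : \sum_i w i = 0 ->
  \sum_i w i * f i = \sum_(j < d.-1) cdf w j * (f j - f j.+1).
Proof.
move=> w_sum0.
have tail (i : 'I_d) : \sum_(j < d.-1 | (i <= j)%N) (f j - f j.+1) = f i - f d.-1.
  have i_le : (i <= d.-1)%N by have := ltn_ord i; lia.
  rewrite (_ : \sum_(j < d.-1 | _) _ = \sum_(i <= j < d.-1) (f j - f j.+1));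
    last by rewrite big_geq_mkord.
  rewrite -opprB -(telescope_sumr f i_le) -sumrN.
  by apply: eq_bigr => j _; rewrite opprB.
rewrite /cdf; symmetry; under eq_bigr => j _ do rewrite mulr_suml big_mkcond /=.
rewrite exchange_big /=.
under eq_bigr => i _ do rewrite -(big_mkcond (fun j : 'I_d.-1 => (i <= j)%N)
  (fun j => w i * (f j - f j.+1))) -mulr_sumr tail mulrBr.
by rewrite sumrB -mulr_suml w_sum0 mul0r subr0.
Qed.

Lemma cdf_proj_weight x k : (k < d.-1)%N ->
  cdf (proj_weight (d := d) t1 D x) k = clamp01 (k.+1%:R - (x - t1) / D).
Proof.
move=> lt_k; set y := (x - t1) / D.
have d_gt0 : (0 < d)%N by case: (d) lt_k.
have k_ge0 : 0 <= k%:R :> R by [].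
rewrite /cdf /proj_weight (_ : theta t1 D 0 = t1); last by rewrite /theta mulr0n mul0r addr0.
have [x_le|x_gt] := lerP x t1.
  have y_le0 : y <= 0 by rewrite /y ler_pdivrMr // mul0r subr_le0.
  rewrite (bigD1 (Ordinal d_gt0)) //= big1 => [|j /andP[_ j_neq0]]; last first.
    by rewrite ifN //; apply: contra j_neq0 => /eqP j0; apply/eqP/val_inj.
  by rewrite /clamp01 -natr1; case_minmax; lra.
have [x_ge|x_lt] := lerP (theta t1 D d.-1) x.
  have y_ge : d.-1%:R <= y by rewrite /y ler_pdivlMr // lerBrDl.
  have : k.+1%:R <= d.-1%:R :> R by rewrite ler_nat.
  rewrite big1 => [|j j_le]; last by rewrite ifN //; apply/eqP; lia.
  by rewrite /clamp01; case_minmax; lra.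
have y_gt0 : 0 < y by rewrite /y divr_gt0 // subr_gt0.
have k_lt_d : (k.+1 <= d)%N by lia.
rewrite -(big_ord_widen _ (fun j => Num.max 0 (1 - `|x - theta t1 D j| / D)) k_lt_d).
rewrite (eq_bigr (fun j : 'I_k.+1 => Num.max 0 (1 - `|j%:R - y|))); last first.
  move=> j _; congr (Num.max 0 (1 - _)).
  have -> : j%:R - y = (theta t1 D j - x) / D by rewrite /y /theta; field; rewrite gt_eqF.
  by rewrite normf_div (gtr0_norm D_gt0) distrC.
rewrite sum_hat /clamp01; case_minmax; lra.
Qed.

Lemma cdf_Lshift b u k : (k < d.-1)%N ->
  cdf (Lshift t1 D b u) k = \sum_i u i * clamp01 (k.+1%:R - i%:R - b / D).
Proof.
move=> lt_k; rewrite /cdf /Lshift exchange_big /=; apply: eq_bigr => i _.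
rewrite -mulr_sumr -[X in _ * X]/(cdf _ k) cdf_proj_weight //.
by congr (_ * clamp01 _); rewrite /theta; field; rewrite gt_eqF.
Qed.

Lemma ler_cramer u v u' v' :
  \sum_(k < d.-1) (cdf u k - cdf v k) ^+ 2 <= \sum_(k < d.-1) (cdf u' k - cdf v' k) ^+ 2 ->
  cramer D u v <= cramer D u' v'.
Proof. by move=> le_sum; rewrite /cramer ler_wsqrtr // ler_wpM2l // ltW. Qed.

Lemma cramer_triangle u v w : cramer D u w <= cramer D u v + cramer D v w.
Proof.
rewrite /cramer !sqrtrM ?(ltW D_gt0) // -mulrDr ler_wpM2l ?sqrtr_ge0 //.
rewrite (eq_bigr (fun k : 'I_d.-1 => ((cdf u k - cdf v k) + (cdf v k - cdf w k)) ^+ 2)).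
  exact: minkowski_sum.
by move=> k _; rewrite addrA subrK.
Qed.

Lemma cramer_Lshift_contract b u v : \sum_i u i = \sum_i v i ->
  cramer D (Lshift t1 D b u) (Lshift t1 D b v) <= cramer D u v.
Proof.
move=> sum_uv; apply: ler_cramer.
pose c (k j : nat) := clamp01 (k.+1%:R - j%:R - b / D).
have diffE (k : 'I_d.-1) : cdf (Lshift t1 D b u) k - cdf (Lshift t1 D b v) k
    = \sum_(j < d.-1) (c k j - c k j.+1) * (cdf u j - cdf v j).
  rewrite !cdf_Lshift // -sumrB.
  rewrite (eq_bigr (fun i => (u i - v i) * c k i)); last by move=> i _; rewrite mulrBl.
  rewrite sum_by_parts; last by rewrite sumrB sum_uv subrr.
  by apply: eq_bigr => j _; rewrite cdfB mulrC.
under eq_bigr => k _ do rewrite diffE.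
apply: sum_sqr_substochastic_le => [k j | k | j].
- by rewrite subr_ge0 ler_clamp01 // -!natr1; lra.
- by rewrite (sumr_ord_telescope _ (c k)) clamp01_subr_le1.
pose F (k : nat) := clamp01 (k%:R - j%:R - b / D).
rewrite (eq_bigr (fun k : 'I_d.-1 => - (F k - F k.+1))); last first.
  by move=> k _; rewrite opprB /c /F -!natr1; congr (_ - clamp01 _); ring.
by rewrite sumrN sumr_ord_telescope opprB clamp01_subr_le1.
Qed.

Lemma sum_sqr_cdf_Lshift_shift a b u : in_simplex u ->
  \sum_(k < d.-1) (cdf (Lshift t1 D a u) k - cdf (Lshift t1 D b u) k) ^+ 2
    <= ((b - a) / D) ^+ 2.
Proof.
move=> u_simplex; wlog le_ab : a b / a <= b.
  move=> wlog_ab; have [|lt_ba] := lerP a b; first exact: wlog_ab.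
  rewrite -sqrrN -mulNr opprB.
  under eq_bigr => k _ do rewrite -sqrrN opprB.
  exact: wlog_ab (ltW lt_ba).
case: u_simplex => u_ge0 u_sum1.
pose c (k i : nat) (e : R) := clamp01 (k.+1%:R - i%:R - e).
have diffE (k : 'I_d.-1) : cdf (Lshift t1 D a u) k - cdf (Lshift t1 D b u) k
    = \sum_i u i * (c k i (a / D) - c k i (b / D)).
  by rewrite !cdf_Lshift // -sumrB; apply: eq_bigr => i _; rewrite mulrBr.
have le_ab' : a / D <= b / D by rewrite ler_pM2r ?invr_gt0.
have weighted_le (F : 'I_d -> R) : (forall i, F i <= (b - a) / D) ->
    \sum_i u i * F i <= (b - a) / D.
  move=> F_le; rewrite -[leRHS]mul1r -u_sum1 mulr_suml.
  by apply: ler_sum => i _; rewrite ler_wpM2l.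
under eq_bigr => k _ do rewrite diffE.
apply: sum_sqr_le_sqr => [k|].
  apply/andP; split.
    by apply: sumr_ge0 => i _; rewrite mulr_ge0 // subr_ge0 ler_clamp01 // lerB.
  apply: weighted_le => i; rewrite mulrBl.
  by apply: le_trans (clamp01_subr_le _) _; lra.
rewrite exchange_big /=; under eq_bigr => i _ do rewrite -mulr_sumr.
apply: weighted_le => i; rewrite mulrBl.
rewrite (eq_bigr (fun k : 'I_d.-1 => clamp01 (k%:R + (1 - i%:R - a / D))
                                    - clamp01 (k%:R + (1 - i%:R - b / D)))).
  by apply: le_trans (sum_clamp01_subr_le _ _) _; lra.
by move=> k _; rewrite /c -natr1; congr (clamp01 _ - clamp01 _); ring.
Qed.

Lemma cramer_Lshift_shift a b u : in_simplex u ->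
  cramer D (Lshift t1 D a u) (Lshift t1 D b u) <= `|a - b| / Num.sqrt D.
Proof.
move=> u_simplex; have D_ge0 := ltW D_gt0.
apply: le_trans (ler_wsqrtr (ler_wpM2l D_ge0 (sum_sqr_cdf_Lshift_shift a b u_simplex))) _.
rewrite sqrtrM // sqrtr_sqr normf_div (gtr0_norm D_gt0) distrC.
suff -> : Num.sqrt D * (`|a - b| / D) = `|a - b| / Num.sqrt D by [].
by rewrite -[X in _ / X](sqr_sqrtr D_ge0); field; rewrite gt_eqF ?sqrtr_gt0.
Qed.

Lemma cramer_Lshift_le a b u v : in_simplex u -> in_simplex v ->
  cramer D (Lshift t1 D a u) (Lshift t1 D b v) <= cramer D u v + `|a - b| / Num.sqrt D.
Proof.
move=> [_ u_sum1] v_simplex; apply: le_trans (cramer_triangle _ (Lshift t1 D a v) _) _.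
apply: lerD; last exact: cramer_Lshift_shift.
by apply: cramer_Lshift_contract; rewrite u_sum1; case: v_simplex.
Qed.

End CramerDistance.

Theorem proposition7 (R : realType) (m d : nat) (theta1 Delta lam : R)
  (hDelta : 0 < Delta) (hlam : (Num.sqrt Delta)^-1 <= lam)
  (s s' : 'I_m) (r : R) (hr : 0 <= r <= 1)
  (p q : 'I_m -> 'I_d -> R) (g g' : R)
  (hp : forall i, in_simplex (p i)) (hq : forall i, in_simplex (q i))
  (hg : 0 <= g <= 1) (hg' : 0 <= g' <= 1) :
  dlam Delta lam (Hupd theta1 Delta g p s r s') r
                 (Hupd theta1 Delta g' q s r s') r
  <= dlam Delta lam p g q g'.
Proof.
rewrite /dlam subrr normr0 mulr0 addr0.
have lam_ge0 : 0 <= lam by apply: le_trans hlam; rewrite invr_ge0 sqrtr_ge0.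
have shift_le : `|g' - g| / Num.sqrt Delta <= lam * `|g - g'|.
  by rewrite distrC mulrC ler_wpM2r.
have cramer_le i : cramer Delta (p i) (q i) <= cramer_inf Delta p q.
  exact: le_bigmax.
have cramer_inf_ge0 : 0 <= cramer_inf Delta p q by exact: bigmax_ge_id.
apply: bigmax_le => [|i _]; first by rewrite addr_ge0 ?mulr_ge0.
rewrite /Hupd; case: eqP => _; last by rewrite ler_wpDr ?mulr_ge0.
apply: le_trans (cramer_Lshift_le theta1 hDelta (r - g) (r - g') (hp s') (hq s')) _.
have -> : r - g - (r - g') = g' - g by ring.
exact: lerD.
Qed.
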